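(* If a graph $G$ is $\mathbb{Z}_3$-colorable, then $G$ is 5-degenerate; that is, $\chi_g(G)\leq Col(G)\leq 6$.
   Context: Graphs are finite, may have multiple edges but no loops. For an Abelian group $\Gamma$, $G$ is $\Gamma$-colorable if for some (equivalently, any) orientation $D$ of $G$ and every $\varphi:E(G)\to\Gamma$ there is $c:V(G)\to\Gamma$ with $c(w)-c(u)\neq\varphi(uw)$ for every directed edge $uw$ of $D$. A graph is $d$-degenerate if every subgraph has a vertex of degree at most $d$. The coloring number $Col(G)$ is the smallest $d$ such that $G$ is $(d-1)$-degenerate; equivalently $Col(G)-1$ is the maximum, over all subgraphs of $G$, of the minimum degree. The group chromatic number $\chi_g(G)$ is the smallest $k$ such that $G$ is $\Gamma$-colorable for every Abelian group $\Gamma$ of order at least $k$. *)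

From mathcomp Require Import all_boot all_order all_algebra.
Set Implicit Arguments. Unset Strict Implicit. Unset Printing Implicit Defensive.
Import GRing.Theory.
Local Open Scope ring_scope.

(* A finite loopless multigraph: vertex type V, edge type E, each edge e has
   endpoints [src e] and [tgt e] (distinct).  The pair (src, tgt) also fixes an
   orientation D of G: e is directed from src e to tgt e.  Every orientation of
   every finite loopless multigraph arises this way. *)
Definition loopless (V E : finType) (src tgt : E -> V) : Prop :=
  forall e : E, src e != tgt e.

Definition Z3_colorable (V E : finType) (src tgt : E -> V) : Prop :=
  forall phi : E -> 'Z_3, exists c : V -> 'Z_3,
    forall e : E, c (tgt e) - c (src e) != phi e.

Definition sub_deg (V E : finType) (src tgt : E -> V) (F : {set E}) (v : V) : nat :=
  #|[set e in F | (src e == v) || (tgt e == v)]|.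

Definition degenerate (V E : finType) (src tgt : E -> V) (d : nat) : Prop :=
  forall (S : {set V}) (F : {set E}),
    (forall e, e \in F -> (src e \in S) && (tgt e \in S)) ->
    S != set0 ->
    exists2 v, v \in S & (sub_deg src tgt F v <= d)%N.

From mathcomp Require Import all_boot all_order all_algebra.
From mathcomp Require Import zify.

Set Implicit Arguments.
Unset Strict Implicit.
Unset Printing Implicit Defensive.

(* A subgraph (S, F) of minimum degree at least 6 has |F| >= 3|S|.  Count
   the functions phi : F -> Z_3: each one admits a good coloring c : S -> Z_3,
   and a fixed c is good for exactly 2^|F| of them, so 3^|F| <= 3^|S| 2^|F|.
   With |F| >= 3|S| > 0 this fails, since 3^3 > 3 * 2^3. *)

Lemma leq_card_covered (T I : finType) (P : {pred T}) (C : {pred I})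
    (B : I -> {pred T}) :
  {in P, forall x, exists2 i, i \in C & x \in B i} ->
  #|P| <= \sum_(i in C) #|B i|.
Proof.
move=> coverP; rewrite -sum1_card.
apply: (@leq_trans (\sum_(x in P) \sum_(i in C) (x \in B i : nat))).
  apply: leq_sum => x /coverP[i Ci Bix].
  by rewrite (bigD1 i) //= Bix.
rewrite exchange_big /= leq_sum // => i _.
rewrite -sum1_card big_mkcond [X in _ <= X]big_mkcond leq_sum // => x _.
by case: (x \in P); case: (x \in B i).
Qed.

Lemma card_pfamily_predC1 (aT rT : finType) (y0 : rT) (D : {pred aT})
    (g : aT -> rT) :
  #|pfamily y0 D (fun x => predC1 (g x))| = #|rT|.-1 ^ #|D|.
Proof.
rewrite (cardE D) card_pfamily /image_mem.
by elim: (enum D) => //= x s ->; rewrite cardC1 expnS.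
Qed.

Section Subgraph.

Variables (V E : finType) (src tgt : E -> V) (S : {set V}) (F : {set E}).

Lemma sum_sub_deg_le : \sum_(v in S) sub_deg src tgt F v <= 2 * #|F|.
Proof.
pose incident e v := (src e == v) || (tgt e == v).
have -> : \sum_(v in S) sub_deg src tgt F v
          = \sum_(v in S) \sum_(e in F) (incident e v : nat).
  apply: eq_bigr => v _; rewrite /sub_deg -sum1_card big_mkcond [RHS]big_mkcond.
  by apply: eq_bigr => e _; rewrite inE /incident; case: (e \in F); case: (_ || _).
rewrite exchange_big /= -sum1_card big_distrr leq_sum // => e _.
rewrite /= muln1 -big_mkcondr sum1_card.
have sub2 : [pred v in S | incident e v] \subset [set src e; tgt e].
  by apply/subsetP => v /andP[_ /orP[] /eqP <-]; rewrite !inE eqxx ?orbT.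
by rewrite (leq_trans (subset_leq_card sub2)) // cards2; case: (_ != _).
Qed.

Lemma min_sub_deg_card_le d :
  {in S, forall v, d <= sub_deg src tgt F v} -> d * #|S| <= 2 * #|F|.
Proof.
move=> dS; apply: leq_trans sum_sub_deg_le.
by rewrite -sum1_card big_distrr /= leq_sum // => v /dS; rewrite muln1.
Qed.

Variable G : finZmodType.
Hypothesis F_in_S : forall e, e \in F -> (src e \in S) && (tgt e \in S).
Hypothesis colorable : forall phi : E -> G,
  exists c : V -> G, forall e, (c (tgt e) - c (src e) != phi e)%R.

Lemma colorable_card_le : #|G| ^ #|F| <= #|G| ^ #|S| * #|G|.-1 ^ #|F|.
Proof.
pose good (c : {ffun V -> G}) :=
  pfamily 0%R F (fun e => predC1 (c (tgt e) - c (src e))%R).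
have cover : {in pffun_on 0%R F predT,
    forall phi, exists2 c, c \in pffun_on 0%R S predT & phi \in good c}.
  move=> phi /pffun_onP[phiF _]; have [c c_ok] := colorable phi.
  exists [ffun v => if v \in S then c v else 0%R].
    apply/pffun_onP; split=> //; apply/subsetP => v.
    by rewrite !inE ffunE; case: (v \in S); rewrite ?eqxx.
  apply/pfamilyP; split=> // e Fe; rewrite !inE !ffunE.
  by case/andP: (F_in_S Fe) => -> ->; rewrite eq_sym.
have := leq_card_covered cover.
rewrite card_pffun_on; under eq_bigr do rewrite card_pfamily_predC1.
by rewrite sum_nat_const card_pffun_on.
Qed.

End Subgraph.

Lemma pow2_pow3_lt s f : 0 < s -> 3 * s <= f -> 3 ^ s * 2 ^ f < 3 ^ f.
Proof.
move=> s_gt0 /subnK <-; move: (f - 3 * s) => k.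
rewrite !(expnD _ k) !(expnM _ 3 s) mulnCA -expnMn.
have le23 : 2 ^ k <= 3 ^ k by case: k => // k; rewrite leq_exp2r.
by rewrite ltn_mulr ?expn_gt0 ?ltn_exp2r.
Qed.

Theorem proposition7p6 (V E : finType) (src tgt : E -> V) :
  loopless src tgt -> Z3_colorable src tgt -> degenerate src tgt 5.
Proof.
(* Loops are harmless to the argument: the degree count is only an upper bound. *)
move=> _ colorable S F F_in_S S_ne0.
apply/exists_inP; apply: contraT => /exists_inPn deg_gt5.
have deg_ge6 : {in S, forall v, 6 <= sub_deg src tgt F v}.
  by move=> v /deg_gt5; rewrite -ltnNge.
have edges_ge : 3 * #|S| <= #|F|.
  by have := min_sub_deg_card_le deg_ge6; lia.
have := colorable_card_le F_in_S colorable.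
by rewrite card_ord leqNgt pow2_pow3_lt ?card_gt0.
Qed.
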